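(* Let $k\subset K$ be a finite totally ramified Galois extension of complete discrete valuation fields with Galois group $G$ and degree $n$, and let $i\in\mathbb Z$. Then $p_i$ induces a well-defined $\bar k$-linear isomorphism of $\bar k$-vector spaces $\mathfrak C_i/\mathfrak C_{i+1}\to R=\bar k[X]/(X^n-1)$.
   Context: $O_K$ is the ring of integers of $K$, $\mathfrak m$ its maximal ideal, $\bar k=O_K/\mathfrak m$ the residue field (also the residue field of $k$), $r:O_K\to\bar k$ the reduction, $v$ the valuation of $K$ with $v(K^* )=\mathbb Z$, $\pi$ a fixed uniformizer of $K$, $d=v(\mathfrak D_{K/k})-n+1$ the ramification depth ($\mathfrak D_{K/k}$ the different). The element $c_\pi=\mathrm{Tr}_{K/k}(\pi^{-d})$ is a unit of $O_k$. Elements $f=\sum_\sigma a_\sigma\sigma\in K[G]$ act on $K$ by $f(x)=\sum_\sigma a_\sigma\sigma(x)$. $\mathfrak C_i=\{f\in K[G]:\ v(f(x))-v(x)\ge i\ \forall x\in K^*\}$; it is an $O_K$-module under left multiplication by $K$, so $\mathfrak C_i/\mathfrak C_{i+1}$ is a $\bar k$-vector space. For $f\in\mathfrak C_i$, $p_i(f)=r(c_\pi)^{-1}\sum_{j=0}^{n-1} r\big(f(\pi^{j-i})/\pi^j\big)X^j\in R$. *)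

From HB Require Import structures.
From mathcomp Require Import all_boot all_order all_algebra all_fingroup all_field.
Set Implicit Arguments. Unset Strict Implicit. Unset Printing Implicit Defensive.
Import Order.TTheory GRing.Theory Num.Theory.
Local Open Scope ring_scope.

Section Defs.
Variables (k : fieldType) (K : splittingFieldType k).

(* v : K -> int is a normalized discrete valuation on K^x (value at 0 irrelevant). *)
Definition is_dvf (v : K -> int) : Prop :=
  [/\ forall x y, x != 0 -> y != 0 -> v (x * y) = v x + v y,
      forall x y, x != 0 -> y != 0 -> x + y != 0 -> Num.min (v x) (v y) <= v (x + y)
    & exists x, x != 0 /\ v x = 1].

(* "v(x) >= m" with the convention v(0) = +oo *)
Definition vge (v : K -> int) (x : K) (m : int) : Prop := x = 0 \/ m <= v x.

Definition vcauchy (v : K -> int) (u : nat -> K) : Prop :=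
  forall N : int, exists M, forall p q, (M <= p)%N -> (M <= q)%N -> vge v (u p - u q) N.
Definition vconv (v : K -> int) (u : nat -> K) (l : K) : Prop :=
  forall N : int, exists M, forall p, (M <= p)%N -> vge v (u p - l) N.
Definition vcomplete (v : K -> int) (S : K -> Prop) : Prop :=
  forall u : nat -> K, (forall p, S (u p)) -> vcauchy v u ->
    exists l, S l /\ vconv v u l.

Definition in_k (x : K) : Prop := x \in (1%VS : {vspace K}).

(* totally ramified: e = [v(K^x) : v(k^x)] = n, i.e. v(k^x) = nZ *)
Definition totally_ramified (v : K -> int) : Prop :=
  (forall x, in_k x -> x != 0 -> ((\dim {:K})%:Z %| v x)%Z) /\
  (exists x, [/\ in_k x, x != 0 & v x = (\dim {:K})%:Z]).

(* r : O_K -> kbar is the reduction onto the residue field O_K / m *)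
Definition residue_map (v : K -> int) (kbar : fieldType) (r : K -> kbar) : Prop :=
  [/\ r 1 = 1,
      forall x y, vge v x 0 -> vge v y 0 -> r (x + y) = r x + r y,
      forall x y, vge v x 0 -> vge v y 0 -> r (x * y) = r x * r y,
      forall c : kbar, exists x, vge v x 0 /\ r x = c
    & forall x, vge v x 0 -> (r x = 0 <-> vge v x 1)].

Definition Trk (x : K) : K := galTrace 1%VS {:K} x.

(* delta = v(D_{K/k}): the codifferent {x | Tr(x O_K) ⊂ O_k} equals pi^(-delta) O_K *)
Definition is_vdiff (v : K -> int) (delta : int) : Prop :=
  forall x, (forall y, vge v y 0 -> vge v (Trk (x * y)) 0) <-> vge v x (- delta).

(* the group ring K[G], G = Gal(K/k), and its action on K *)
Definition KG := {ffun gal_of {:K} -> K}.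
Definition gact (f : KG) (x : K) : K :=
  \sum_(s in ('Gal({:K} / 1%VS))%g) f s * s x.
Definition kscale (a : K) (f : KG) : KG := [ffun s => a * f s].
Definition kadd (f g : KG) : KG := [ffun s => f s + g s].

Definition Cfil (v : K -> int) (i : int) (f : KG) : Prop :=
  forall x, x != 0 -> vge v (gact f x) (v x + i).

Definition p_map (v : K -> int) (kbar : fieldType) (r : K -> kbar) (pi : K)
    (delta i : int) (f : KG) : {poly kbar} :=
  let n := \dim {:K} in
  let d := delta - n%:Z + 1 in
  let c := Trk (pi ^ (- d)) in
  (r c)^-1 *: \sum_(j < n) r (gact f (pi ^ (j%:Z - i)) / pi ^+ j) *: 'X^j.

(* equality in R = kbar[X]/(X^n - 1) *)
Definition eqR (kbar : fieldType) (q1 q2 : {poly kbar}) : Prop :=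
  ('X^(\dim {:K}) - 1 %| q1 - q2)%R.

End Defs.

(* Since K/k is totally ramified, the k-multiples of pi^j (j < n) have pairwise distinct
   valuations modulo n, so the pi^j form a k-basis of K and membership of f in C_m can be
   read off the values f(pi^(j-i)), j < n. The coefficients of p_i(f) are the residues of
   f(pi^(j-i))/pi^j, and they all vanish exactly when f lies in C_(i+1). For surjectivity,
   the codifferent gives v(Tr z) >= v(z) + d and forces c_pi to be a unit, so that the
   element x |-> sum_l b_l pi^l Tr(pi^(i-d-l) x) of K[G] has coefficients r(b_j). *)

From Pilot Require Import Defs.
From HB Require Import structures.
From mathcomp Require Import all_boot all_order all_algebra all_fingroup all_field.
From mathcomp Require Import zify ring.
Set Implicit Arguments. Unset Strict Implicit. Unset Printing Implicit Defensive.
Import Order.TTheory GRing.Theory Num.Theory.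
Local Open Scope ring_scope.

Section TotallyRamifiedExtension.
Variables (k : fieldType) (K : splittingFieldType k) (v : K -> int).
Hypothesis v_dvf : is_dvf v.

Lemma valM {x y} : x != 0 -> y != 0 -> v (x * y) = v x + v y.
Proof. by case: v_dvf => h _ _; apply: h. Qed.

Lemma val1 : v 1 = 0.
Proof. by have := @valM 1 1 (oner_neq0 K) (oner_neq0 K); rewrite mulr1; lia. Qed.

Lemma valN1 : v (-1) = 0.
Proof.
have N1_neq0 : (-1 : K) != 0 by rewrite oppr_eq0 oner_neq0.
by have := @valM (-1) (-1) N1_neq0 N1_neq0; rewrite mulrNN mulr1 val1; lia.
Qed.

Lemma valV x : x != 0 -> v x^-1 = - v x.
Proof. by move=> x0; have := @valM x x^-1 x0 (invr_neq0 x0); rewrite mulfV // val1; lia. Qed.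

Lemma valXn x (m : nat) : x != 0 -> v (x ^+ m) = m%:Z * v x.
Proof.
move=> x0; elim: m => [|m IHm]; first by rewrite expr0 val1 mul0r.
by rewrite exprS valM ?expf_neq0 // IHm; lia.
Qed.

Lemma valXz x (z : int) : x != 0 -> v (x ^ z) = z * v x.
Proof.
move=> x0; case: z => m; first by rewrite -exprnP valXn.
by rewrite NegzE -exprnN valV ?expf_neq0 // valXn //; lia.
Qed.

Lemma vge_le {x m m'} : vge v x m -> m' <= m -> vge v x m'.
Proof. by case=> [->|h] le_m'm; [left|right; lia]. Qed.

Lemma vge_val x : vge v x (v x).
Proof. by right. Qed.

Lemma vge_neq0 {x m} : x != 0 -> vge v x m -> m <= v x.
Proof. by move=> x0 [/eqP|//]; rewrite (negPf x0). Qed.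

Lemma vge_eq0 x : (forall m, vge v x m) -> x = 0.
Proof. by move=> /(_ (v x + 1)) [//|]; lia. Qed.

Lemma vgeM {x y a b} : vge v x a -> vge v y b -> vge v (x * y) (a + b).
Proof.
case=> [->|hx]; first by rewrite mul0r; left.
case=> [->|hy]; first by rewrite mulr0; left.
have [->|x0] := eqVneq x 0; first by rewrite mul0r; left.
have [->|y0] := eqVneq y 0; first by rewrite mulr0; left.
by right; rewrite valM //; lia.
Qed.

Lemma vgeD {x y m} : vge v x m -> vge v y m -> vge v (x + y) m.
Proof.
case=> [->|hx]; first by rewrite add0r.
case=> [->|hy]; first by rewrite addr0; right.
have [->|x0] := eqVneq x 0; first by rewrite add0r; right.
have [->|y0] := eqVneq y 0; first by rewrite addr0; right.
have [->|xy0] := eqVneq (x + y) 0; first by left.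
case: v_dvf => _ ultra _; right.
by apply: le_trans (ultra x y x0 y0 xy0); rewrite le_min hx hy.
Qed.

Lemma vgeN {x m} : vge v x m -> vge v (- x) m.
Proof.
have vgeN1 : vge v (-1) 0 by right; rewrite valN1.
by move=> hx; rewrite -mulN1r -[m]add0r; apply: vgeM.
Qed.

Lemma vgeB {x y m} : vge v x m -> vge v y m -> vge v (x - y) m.
Proof. by move=> hx /vgeN; apply: vgeD. Qed.

Lemma vge_sum (I : finType) (P : pred I) (F : I -> K) m :
  (forall j, P j -> vge v (F j) m) -> vge v (\sum_(j | P j) F j) m.
Proof.
by move=> hF; apply: (big_ind (vge v ^~ m)) => //; [left|move=> a b; apply: vgeD].
Qed.

(* The term of least valuation cannot be cancelled by the others. *)
Lemma vge_sum_distinct (I : finType) (F : I -> K) m :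
  (forall j l, j != l -> F j != 0 -> F l != 0 -> v (F j) != v (F l)) ->
  vge v (\sum_j F j) m -> forall j, vge v (F j) m.
Proof.
move=> distinct hsum j.
have [->|Fj0] := eqVneq (F j) 0; first by left.
have [|lt_Fj_m] := lerP m (v (F j)); first by right.
have [l Fl0 l_min] :=
  @Order.TotalTheory.arg_minP _ _ _ j [pred l | F l != 0] (fun l => v (F l)) Fj0.
have rest : vge v (\sum_(l' | l' != l) F l') (v (F l) + 1).
  apply: vge_sum => l' ne_l'l; have [->|Fl'0] := eqVneq (F l') 0; first by left.
  right; have := distinct _ _ ne_l'l Fl'0 Fl0; have := l_min l' Fl'0.
  by rewrite le_eqVlt eq_sym => /orP[/eqP ->|]; [rewrite eqxx|lia].
have lt_Fl_m : v (F l) + 1 <= m by have := l_min j Fj0; lia.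
move: hsum; rewrite (bigD1 l) //= => /vge_le /(_ lt_Fl_m) /vgeB /(_ rest).
by rewrite addrK => /(vge_neq0 Fl0); lia.
Qed.

Variable pi : K.
Hypotheses (v_totally_ramified : totally_ramified v) (pi_neq0 : pi != 0) (v_pi : v pi = 1).

Local Notation n := (\dim {:K}).

Lemma val_piXz (z : int) : v (pi ^ z) = z.
Proof. by rewrite valXz // v_pi mulr1. Qed.

Lemma vge_piXz (z : int) : vge v (pi ^ z) z.
Proof. by right; rewrite val_piXz. Qed.

Lemma vge_piXn (j : nat) : vge v (pi ^+ j) j.
Proof. by rewrite exprnP; apply: vge_piXz. Qed.

Lemma dvdz_val_in_k {x} : in_k x -> x != 0 -> (n%:Z %| v x)%Z.
Proof. by case: v_totally_ramified => h _; apply: h. Qed.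

Lemma vge_in_k_ceil x (m M : int) :
  in_k x -> n%:Z * M < m + n%:Z -> vge v x m -> vge v x (n%:Z * M).
Proof.
move=> kx lt_nM [->|le_m_vx]; first by left.
have [->|x0] := eqVneq x 0; first by left.
right; have /dvdzP[q vx] := dvdz_val_in_k kx x0; rewrite vx in le_m_vx *.
have : q <= M - 1 \/ M <= q by lia.
by case=> hq; nia.
Qed.

Lemma vge_in_k_n x : in_k x -> vge v x 1 -> vge v x n%:Z.
Proof. by move=> kx /(vge_in_k_ceil (M := 1) kx); rewrite mulr1; apply; lia. Qed.

Lemma vge_in_k_0 x m : in_k x -> - n%:Z < m -> vge v x m -> vge v x 0.
Proof. by move=> kx gt_m /(vge_in_k_ceil (M := 0) kx); rewrite mulr0; apply; lia. Qed.

Lemma in_k_alg (c : k) : in_k (c%:A : K).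
Proof. by apply/vlineP; exists c. Qed.

Lemma alg_eq0 (c : k) : ((c%:A : K) == 0) = (c == 0).
Proof. by rewrite scaler_eq0 oner_eq0 orbF. Qed.

Lemma val_scale_piXn (c : k) (j : nat) :
  c != 0 -> v (c *: pi ^+ j) = v c%:A + j%:Z.
Proof.
move=> c0; rewrite -[c *: _]mulr_algl valM ?alg_eq0 ?expf_neq0 //.
by rewrite exprnP val_piXz.
Qed.

Lemma modz_val_scale_piXn (c : k) (j : 'I_n) :
  c != 0 -> (v (c *: pi ^+ j) %% n%:Z)%Z = j%:Z.
Proof.
move=> c0; have cA0 : (c%:A : K) != 0 by rewrite alg_eq0.
have /dvdzP[q vc] := dvdz_val_in_k (in_k_alg c) cA0.
by rewrite val_scale_piXn // vc modzMDl modz_small // ltz_nat ltn_ord.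
Qed.

Lemma vge_scale_piXn (c : k) (j : nat) m :
  vge v (c *: pi ^+ j) m -> vge v (c%:A : K) (m - j%:Z).
Proof.
have [->|c0] := eqVneq c 0; first by left; rewrite scale0r.
have cpi0 : c *: pi ^+ j != 0 by rewrite scaler_eq0 negb_or c0 expf_neq0.
by move/(vge_neq0 cpi0); rewrite val_scale_piXn // => le_m; right; lia.
Qed.

Lemma vge_sum_scale_piXn (a : 'I_n -> k) m :
  vge v (\sum_(j < n) a j *: pi ^+ j) m -> forall j : 'I_n, vge v (a j *: pi ^+ j) m.
Proof.
apply: vge_sum_distinct => j l ne_jl.
rewrite !scaler_eq0 !negb_or => /andP[aj0 _] /andP[al0 _].
apply: contraNneq ne_jl => eq_val; apply/eqP/val_inj/eqP.
by rewrite -eqz_nat -(modz_val_scale_piXn j aj0) -(modz_val_scale_piXn l al0) eq_val.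
Qed.

Definition piX_basis : n.-tuple K := [tuple pi ^+ j | j < n].

Lemma piX_basisP : basis_of fullv piX_basis.
Proof.
rewrite basisEfree subvf size_tuple leqnn !andbT; apply/freeP => a sum_a0 j.
have /eqP : a j *: pi ^+ j = 0.
  apply: vge_eq0 => m; apply: vge_sum_scale_piXn; left.
  by rewrite -[RHS]sum_a0; apply: eq_bigr => l _; rewrite -tnth_nth tnth_mktuple.
by rewrite scaler_eq0 expf_eq0 (negPf pi_neq0) andbF orbF => /eqP.
Qed.

Lemma piX_expansion x : x = \sum_(j < n) coord piX_basis j x *: pi ^+ j.
Proof.
rewrite {1}(coord_basis piX_basisP (memvf x)).
by apply: eq_bigr => j _; rewrite -tnth_nth tnth_mktuple.
Qed.

Lemma vge_coord_piX y m (j : 'I_n) :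
  vge v y m -> vge v ((coord piX_basis j y)%:A : K) (m - j%:Z).
Proof. by rewrite {1}(piX_expansion y) => /vge_sum_scale_piXn/(_ j)/vge_scale_piXn. Qed.

Lemma gact_kadd (f g : KG K) x : Defs.gact (kadd f g) x = Defs.gact f x + Defs.gact g x.
Proof. by rewrite /Defs.gact -big_split; apply: eq_bigr => s _; rewrite ffunE mulrDl. Qed.

Lemma gact_kscale (f : KG K) a x : Defs.gact (kscale a f) x = a * Defs.gact f x.
Proof. by rewrite /Defs.gact mulr_sumr; apply: eq_bigr => s _; rewrite ffunE mulrA. Qed.

Lemma gact_sum (f : KG K) (I : finType) (F : I -> K) :
  Defs.gact f (\sum_j F j) = \sum_j Defs.gact f (F j).
Proof.
rewrite /Defs.gact exchange_big /=; apply: eq_bigr => s _.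
by rewrite rmorph_sum mulr_sumr.
Qed.

Lemma gact_mull (f : KG K) a x : in_k a -> Defs.gact f (a * x) = a * Defs.gact f x.
Proof.
move=> ka; rewrite /Defs.gact mulr_sumr; apply: eq_bigr => s s_gal.
by rewrite rmorphM /= (fixed_gal (sub1v _) s_gal ka) mulrCA.
Qed.

Definition trace_comb (c a : 'I_n -> K) : KG K :=
  [ffun s : gal_of {:K} => \sum_l c l * s (a l)].

Lemma gact_trace_comb c a x : Defs.gact (trace_comb c a) x = \sum_l c l * Trk (a l * x).
Proof.
rewrite /Defs.gact; under eq_bigr => s _ do rewrite ffunE mulr_suml.
rewrite exchange_big /=; apply: eq_bigr => l _.
by rewrite /Trk /galTrace mulr_sumr; apply: eq_bigr => s _; rewrite rmorphM mulrA.
Qed.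

Lemma Cfil_le (f : KG K) m m' : m' <= m -> Cfil v m f -> Cfil v m' f.
Proof. by move=> le_m'm hf x x0; apply: vge_le (hf x x0) _; rewrite lerD2l. Qed.

Lemma CfilP (s m : int) (f : KG K) :
  Cfil v m f <-> forall j : 'I_n, vge v (Defs.gact f (pi ^ (j%:Z + s))) (j%:Z + s + m).
Proof.
split=> [hf j|hf x x0].
  by have := hf _ (expfz_neq0 (j%:Z + s) pi_neq0); rewrite val_piXz.
set y := x * pi ^ (- s).
have def_x : x = \sum_(j < n) (coord piX_basis j y)%:A * pi ^ (j%:Z + s).
  rewrite -[x](mulfK (expfz_neq0 (- s) pi_neq0)) -/y {1}(piX_expansion y) mulr_suml.
  apply: eq_bigr => j _.
  by rewrite mulr_algl -scalerAl invr_expz opprK exprnP -expfzDr.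
rewrite {1}def_x gact_sum; apply: vge_sum => j _; rewrite gact_mull; last exact: in_k_alg.
have vy : v y = v x - s by rewrite valM ?expfz_neq0 // val_piXz.
by apply: vge_le (vgeM (vge_coord_piX j (vge_val y)) (hf j)) _; rewrite vy; lia.
Qed.

Variable delta : int.
Hypotheses (K_galois : galois 1%VS {:K}) (delta_different : is_vdiff v delta).

Local Notation depth := (delta - n%:Z + 1).

Lemma Trk_in_k (x : K) : in_k (Trk x).
Proof. exact: mem_galTrace K_galois (memvf x). Qed.

Lemma Trk_mull (a x : K) : in_k a -> Trk (a * x) = a * Trk x.
Proof.
move=> ka; rewrite /Trk /galTrace mulr_sumr; apply: eq_bigr => s s_gal.
by rewrite rmorphM /= (fixed_gal (sub1v _) s_gal ka).
Qed.

Lemma Trk_sum (I : finType) (F : I -> K) : Trk (\sum_j F j) = \sum_j Trk (F j).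
Proof. exact: raddf_sum. Qed.

(* Scale the codifferent by a power of an element of k of valuation n. *)
Lemma vge_Trk_codiff z (M : int) :
  vge v z (- delta + n%:Z * M) -> vge v (Trk z) (n%:Z * M).
Proof.
case: v_totally_ramified => _ [c [kc c0 vc]] vz.
have kcM (N : int) : in_k (c ^ N) by apply: rpredXz.
have vge_cM (N : int) : vge v (c ^ N) (n%:Z * N) by right; rewrite valXz // vc mulrC.
have vz' : vge v (c ^ (- M) * z) (- delta).
  by move: (vgeM (vge_cM (- M)) vz); rewrite mulrN addrC addrK.
have := (delta_different _).2 vz' 1 (or_intror _); rewrite val1 // mulr1 => /(_ (lexx _)).
rewrite Trk_mull // => /(vgeM (vge_cM M)); rewrite addr0 mulrA -expfzDr //.
by rewrite subrr expr0z mul1r.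
Qed.

Lemma vge_Trk z m : vge v z m -> vge v (Trk z) (m + depth).
Proof.
have n_gt0 : (0 < n%:Z) by rewrite ltz_nat adim_gt0.
have := divz_eq (m + delta) n%:Z; have := ltz_pmod (m + delta) n_gt0.
have := modz_ge0 (m + delta) (lt0r_neq0 n_gt0).
set M := ((m + delta) %/ n%:Z)%Z; set t := ((m + delta) %% n%:Z)%Z => t_ge0 t_lt_n def_M vz.
have /vge_Trk_codiff : vge v z (- delta + n%:Z * M) by apply: vge_le vz _; lia.
by move/vge_le; apply; lia.
Qed.

Lemma vge_Trk_piXz (t : int) : vge v (Trk (pi ^ (t - depth))) t.
Proof. by have := vge_Trk (vge_piXz (t - depth)); rewrite subrK. Qed.

Lemma vge_Trk_piXz_neq0 (t : int) : t != 0 -> - n%:Z < t -> t < n%:Z ->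
  vge v (Trk (pi ^ (t - depth))) (t + 1).
Proof.
move=> t0 gt_t lt_t; have [t_gt0|t_lt0] := lerP 1 t.
  by apply: vge_le (vge_in_k_n (Trk_in_k _) (vge_le (vge_Trk_piXz t) t_gt0)) _; lia.
by apply: vge_le (vge_in_k_0 (Trk_in_k _) gt_t (vge_Trk_piXz t)) _; lia.
Qed.

Local Notation c_pi := (Trk (pi ^ (- depth))).

Lemma vge_c_pi : vge v c_pi 0.
Proof. by have := vge_Trk_piXz 0; rewrite sub0r. Qed.

(* If c_pi were in the maximal ideal, pi^(-depth) / (element of k of valuation n)
   would lie in the codifferent, although its valuation is - delta - 1. *)
Lemma c_pi_unit : ~ vge v c_pi 1.
Proof.
move=> c_pi_gt0.
have Trk_piX_ge (j : 'I_n) : vge v (Trk (pi ^ (j%:Z - depth))) n%:Z.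
  have Trk_ge1 : vge v (Trk (pi ^ (j%:Z - depth))) 1.
    have [j0|j_gt0] := posnP j; last by apply: vge_le (vge_Trk_piXz _) _; lia.
    by rewrite j0 sub0r.
  exact: vge_in_k_n (Trk_in_k _) Trk_ge1.
case: v_totally_ramified => _ [c [kc c0 vc]].
set x := c^-1 * pi ^ (- depth).
have x0 : x != 0 by rewrite mulf_neq0 ?invr_neq0 ?expfz_neq0.
have vx : v x = - delta - 1 by rewrite valM ?invr_neq0 ?expfz_neq0 // valV // val_piXz vc; lia.
suff /(delta_different x).1 : forall y, vge v y 0 -> vge v (Trk (x * y)) 0.
  by move/(vge_neq0 x0); rewrite vx; lia.
move=> y vy; rewrite (piX_expansion y) mulr_sumr Trk_sum; apply: vge_sum => j _.
set a := coord piX_basis j y.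
have va : vge v (a%:A : K) 0.
  by apply: vge_in_k_0 (in_k_alg a) _ (vge_coord_piX j vy); have := ltn_ord j; lia.
have -> : x * (a *: pi ^+ j) = (c^-1 * a%:A) * pi ^ (j%:Z - depth).
  by rewrite -[a *: _]mulr_algl /x exprnP expfzDr //; ring.
rewrite Trk_mull; last by rewrite /in_k rpredM ?rpredV ?in_k_alg.
have vc' : vge v c^-1 (- n%:Z) by right; rewrite valV // vc.
by apply: vge_le (vgeM (vgeM vc' va) (Trk_piX_ge j)) _; lia.
Qed.

Variables (kbar : fieldType) (r : K -> kbar).
Hypothesis r_residue : residue_map v r.

Lemma residueD x y : vge v x 0 -> vge v y 0 -> r (x + y) = r x + r y.
Proof. by case: r_residue => _ h _ _ _; apply: h. Qed.

Lemma residueM x y : vge v x 0 -> vge v y 0 -> r (x * y) = r x * r y.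
Proof. by case: r_residue => _ _ h _ _; apply: h. Qed.

Lemma residue_eq0 x : vge v x 0 -> r x = 0 <-> vge v x 1.
Proof. by case: r_residue => _ _ _ _ h; apply: h. Qed.

Lemma residue_surj c : exists x, vge v x 0 /\ r x = c.
Proof. by case: r_residue => _ _ _ h _; apply: h. Qed.

Lemma residue_c_pi_neq0 : r c_pi != 0.
Proof. by apply/eqP => /(residue_eq0 vge_c_pi) /c_pi_unit. Qed.

Variable i : int.
Local Notation p := (p_map v r pi delta i).

Definition p_coef (f : KG K) (j : nat) : K := Defs.gact f (pi ^ (j%:Z - i)) / pi ^+ j.

Lemma p_mapE f : p f = (r c_pi)^-1 *: \poly_(j < n) r (p_coef f j).
Proof. by rewrite /p_map poly_def. Qed.

Lemma size_p_map f : (size (p f) <= n)%N.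
Proof. by rewrite p_mapE (leq_trans (size_scale_leq _ _)) ?size_poly. Qed.

Lemma vge_p_coef {m f} j : Cfil v m f -> vge v (p_coef f j) (m - i).
Proof.
move=> hf; have := vgeM (hf _ (expfz_neq0 (j%:Z - i) pi_neq0)) (vge_val (pi ^+ j)^-1).
rewrite /p_coef val_piXz valV ?expf_neq0 // valXn // v_pi.
by move/vge_le; apply; lia.
Qed.

Lemma vge0_p_coef {f} j : Cfil v i f -> vge v (p_coef f j) 0.
Proof. by move/(vge_p_coef j); rewrite subrr. Qed.

Lemma p_map_Cfil_succ f : Cfil v (i + 1) f -> p f = 0.
Proof.
move=> hf; apply/polyP => j; rewrite p_mapE coefZ coef_poly coef0.
case: ifP => _; last by rewrite mulr0.
have := vge_p_coef j hf; rewrite addrAC subrr add0r => p_coef_ge1.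
by rewrite (residue_eq0 (vge_le p_coef_ge1 ler01)).2 // mulr0.
Qed.

Lemma p_mapD f g : Cfil v i f -> Cfil v i g -> p (kadd f g) = p f + p g.
Proof.
move=> hf hg; apply/polyP => j; rewrite coefD !p_mapE !coefZ !coef_poly.
case: ifP => _; last by rewrite !mulr0 addr0.
rewrite /p_coef gact_kadd mulrDl residueD; try exact: vge0_p_coef.
by rewrite mulrDr.
Qed.

Lemma p_mapZ a f : vge v a 0 -> Cfil v i f -> p (kscale a f) = r a *: p f.
Proof.
move=> ha hf; apply/polyP => j; rewrite !p_mapE !coefZ !coef_poly.
case: ifP => _; last by rewrite !mulr0.
rewrite /p_coef gact_kscale -mulrA residueM //; last exact: vge0_p_coef.
by rewrite mulrCA.
Qed.

Lemma Cfil_succ_p_map_eq0 f : Cfil v i f -> p f = 0 -> Cfil v (i + 1) f.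
Proof.
move=> hf pf0; apply/(CfilP (- i)) => j.
have : r (p_coef f j) = 0.
  move/polyP: pf0 => /(_ j); rewrite p_mapE coefZ coef_poly ltn_ord coef0.
  by move/eqP; rewrite mulf_eq0 invr_eq0 (negPf residue_c_pi_neq0) => /eqP.
move/(residue_eq0 (vge0_p_coef j hf)) => /(vgeM (vge_val (pi ^+ j))).
by rewrite /p_coef mulrC divfK ?expf_neq0 // valXn // v_pi => /vge_le; apply; lia.
Qed.

Definition trace_lift (b : 'I_n -> K) : KG K :=
  trace_comb (fun l => b l * pi ^+ l) (fun l => pi ^ (i - depth - l%:Z)).

Lemma Cfil_trace_lift b : (forall l, vge v (b l) 0) -> Cfil v i (trace_lift b).
Proof.
move=> b_ge0 x x0; rewrite gact_trace_comb; apply: vge_sum => l _.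
have Trk_ge := vge_Trk (vgeM (vge_piXz (i - depth - l%:Z)) (vge_val x)).
by have := vgeM (vgeM (b_ge0 l) (vge_piXn l)) Trk_ge; move/vge_le; apply; lia.
Qed.

(* Only the term l = j survives modulo the maximal ideal, because
   Tr(pi^(t - depth)) has valuation > t whenever 0 < |t| < n. *)
Lemma residue_p_coef_trace_lift b (j : 'I_n) :
  (forall l, vge v (b l) 0) -> r (p_coef (trace_lift b) j) = r (b j) * r c_pi.
Proof.
move=> b_ge0.
have term l : b l * pi ^+ l * Trk (pi ^ (i - depth - l%:Z) * pi ^ (j%:Z - i)) / pi ^+ j
    = b l * (pi ^ (l%:Z - j%:Z) * Trk (pi ^ (j%:Z - l%:Z - depth))).
  rewrite -expfzDr // (_ : i - depth - l%:Z + (j%:Z - i) = j%:Z - l%:Z - depth); last by lia.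
  by rewrite [pi ^ (l%:Z - j%:Z)]expfzDr // -invr_expz !exprnP; ring.
rewrite /p_coef gact_trace_comb mulr_suml (eq_bigr _ (fun l _ => term l)) (bigD1 j) //=.
rewrite subrr expr0z mul1r sub0r.
set rest := (X in r (_ + X)).
have rest_ge1 : vge v rest 1.
  apply: vge_sum => l ne_lj; have := ltn_ord l; have := ltn_ord j.
  have t0 : j%:Z - l%:Z != 0 by rewrite subr_eq0 eqz_nat eq_sym.
  move=> lt_j_n lt_l_n; have gt_t : - n%:Z < j%:Z - l%:Z by lia.
  have lt_t : j%:Z - l%:Z < n%:Z by lia.
  have := vge_Trk_piXz_neq0 t0 gt_t lt_t.
  by move/(vgeM (vge_piXz (l%:Z - j%:Z)))/(vgeM (b_ge0 l))/vge_le; apply; lia.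
have rest_ge0 := vge_le rest_ge1 ler01.
rewrite residueD ?(residue_eq0 rest_ge0).2 ?addr0 //; last exact: vgeM (b_ge0 j) vge_c_pi.
by rewrite residueM //; apply: vge_c_pi.
Qed.

Lemma p_map_surj (q : {poly kbar}) : (size q <= n)%N -> exists2 f, Cfil v i f & p f = q.
Proof.
move=> size_q; have [b hb] := fin_all_exists (fun l : 'I_n => residue_surj q`_l).
have b_ge0 l : vge v (b l) 0 by case: (hb l).
exists (trace_lift b); first exact: Cfil_trace_lift.
apply/polyP => m; rewrite p_mapE coefZ coef_poly; case: ifP => lt_m_n; last first.
  by rewrite mulr0 nth_default // (leq_trans size_q) // leqNgt lt_m_n.
rewrite (residue_p_coef_trace_lift (Ordinal lt_m_n) b_ge0) (hb _).2 /=.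
by rewrite mulrC mulfK // residue_c_pi_neq0.
Qed.

End TotallyRamifiedExtension.

Section QuotientRing.
Variables (k : fieldType) (K : splittingFieldType k) (kbar : fieldType).
Local Notation n := (\dim {:K}).

Lemma eqR_refl (q : {poly kbar}) : eqR K q q.
Proof. by rewrite /eqR subrr dvdp0. Qed.

Lemma eqR_modp (q : {poly kbar}) : eqR K (q %% ('X^n - 1)) q.
Proof.
by rewrite /eqR {2}(divp_eq q ('X^n - 1)) opprD addrCA subrr addr0 dvdpNr dvdp_mull.
Qed.

Lemma size_modp_Xn_sub1 (q : {poly kbar}) : (size (q %% ('X^n - 1))%R <= n)%N.
Proof.
have D0 : 'X^n - 1 != 0 :> {poly kbar} by rewrite -size_poly_eq0 size_XnsubC ?adim_gt0.
by have := ltn_modpN0 q D0; rewrite size_XnsubC ?adim_gt0.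
Qed.

Lemma eqR0_small (q : {poly kbar}) : (size q <= n)%N -> eqR K q 0 -> q = 0.
Proof.
rewrite /eqR subr0 => size_q D_dvd_q; apply/eqP; apply: contraTT size_q => q0.
by rewrite -ltnNge (leq_trans _ (dvdp_leq q0 D_dvd_q)) // size_XnsubC ?adim_gt0.
Qed.

End QuotientRing.

Theorem lemma2p1p2 (k : fieldType) (K : splittingFieldType k)
  (v : K -> int) (kbar : fieldType) (r : K -> kbar) (pi : K) (delta : int) (i : int) :
  is_dvf v ->
  vcomplete v (fun _ => True) ->
  vcomplete v (@in_k k K) ->
  galois 1%VS {:K} ->
  totally_ramified v ->
  residue_map v r ->
  pi != 0 -> v pi = 1 ->
  is_vdiff v delta ->
  let p := p_map v r pi delta i in
  [/\ (* well defined: C_(i+1) ⊂ C_i maps to 0 *)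
      (forall f, Cfil v (i + 1) f -> Cfil v i f /\ eqR K (p f) 0),
      (* additive *)
      (forall f g, Cfil v i f -> Cfil v i g -> eqR K (p (kadd f g)) (p f + p g)),
      (* kbar-linear: O_K acts on C_i/C_(i+1) through r *)
      (forall a f, vge v a 0 -> Cfil v i f -> eqR K (p (kscale a f)) (r a *: p f)),
      (* injective on C_i / C_(i+1) *)
      (forall f, Cfil v i f -> eqR K (p f) 0 -> Cfil v (i + 1) f)
    & (* surjective onto R *)
      (forall q : {poly kbar}, exists f, Cfil v i f /\ eqR K (p f) q)].
Proof.
move=> v_dvf _ _ K_galois v_tr r_res pi0 v_pi v_diff p.
have eqR_eq (q1 q2 : {poly kbar}) : q1 = q2 -> eqR K q1 q2 by move=> ->; apply: eqR_refl.
split.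
- move=> f hf; split; first by apply: Cfil_le hf; lia.
  exact/eqR_eq/(p_map_Cfil_succ v_dvf pi0 v_pi _ K_galois r_res).
- by move=> f g hf hg; apply/eqR_eq/(p_mapD v_dvf pi0 v_pi _ K_galois r_res).
- by move=> a f ha hf; apply/eqR_eq/(p_mapZ v_dvf pi0 v_pi _ K_galois r_res).
- move=> f hf /(eqR0_small (size_p_map v pi delta r i f)).
  exact: (Cfil_succ_p_map_eq0 v_dvf v_tr pi0 v_pi K_galois v_diff r_res hf).
- move=> q; have := size_modp_Xn_sub1 K q.
  move=> /(p_map_surj v_dvf v_tr pi0 v_pi K_galois v_diff r_res i) [f hf pf].
  by exists f; split=> //; rewrite /p pf; apply: eqR_modp.
Qed.
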